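(* Let $\Gamma\cup\{\phi\}$ be a set of formulas. Then $\mathsf{ICK}\oplus\Gamma\vdash\phi$ implies $\Gamma\models\phi$, i.e. every conditional frame validating all formulas in $\Gamma$ validates $\phi$.
   Context: Formulas are generated by $\phi ::= p\mid\bot\mid\phi\wedge\phi\mid\phi\vee\phi\mid\phi\to\phi\mid\phi\mathrel{\Box\!\!\!\rightarrow}\phi$. $\mathsf{ICK}\oplus\Gamma$ is the smallest set of formulas containing intuitionistic propositional logic, $\Gamma$, $(p\mathrel{\Box\!\!\!\rightarrow}(q\wedge r))\leftrightarrow((p\mathrel{\Box\!\!\!\rightarrow} q)\wedge(p\mathrel{\Box\!\!\!\rightarrow} r))$ and $(p\mathrel{\Box\!\!\!\rightarrow}\top)\leftrightarrow\top$, closed under uniform substitution, modus ponens, and the congruence rules for both arguments of $\mathrel{\Box\!\!\!\rightarrow}$. A conditional frame is $(X,\leq,\mathcal{R})$ with $(X,\leq)$ a nonempty preorder and $\mathcal{R}=\{R_a\mid a\text{ an upset}\}$ relations with $(\leq\circ R_a)\subseteq(R_a\circ\leq)$. Valuations assign upsets to letters; $x\models\phi\mathrel{\Box\!\!\!\rightarrow}\psi$ iff every $y$ with $xR_{V(\phi)}y$ satisfies $\psi$. *)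

Inductive form : Type :=
| Var : nat -> form
| Bot : form
| And : form -> form -> form
| Or  : form -> form -> form
| Imp : form -> form -> form
| Cond : form -> form -> form.

Definition Top : form := Imp Bot Bot.
Definition Iff (a b : form) : form := And (Imp a b) (Imp b a).

Fixpoint subst (s : nat -> form) (f : form) : form :=
  match f with
  | Var p => s p
  | Bot => Bot
  | And a b => And (subst s a) (subst s b)
  | Or a b => Or (subst s a) (subst s b)
  | Imp a b => Imp (subst s a) (subst s b)
  | Cond a b => Cond (subst s a) (subst s b)
  end.

Inductive ipc_axiom : form -> Prop :=
| ax_K  a b   : ipc_axiom (Imp a (Imp b a))
| ax_S  a b c : ipc_axiom (Imp (Imp a (Imp b c)) (Imp (Imp a b) (Imp a c)))
| ax_A1 a b   : ipc_axiom (Imp (And a b) a)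
| ax_A2 a b   : ipc_axiom (Imp (And a b) b)
| ax_A3 a b   : ipc_axiom (Imp a (Imp b (And a b)))
| ax_O1 a b   : ipc_axiom (Imp a (Or a b))
| ax_O2 a b   : ipc_axiom (Imp b (Or a b))
| ax_O3 a b c : ipc_axiom (Imp (Imp a c) (Imp (Imp b c) (Imp (Or a b) c)))
| ax_EFQ a    : ipc_axiom (Imp Bot a).

Definition p0 := Var 0.
Definition p1 := Var 1.
Definition p2 := Var 2.

Inductive ICK_deriv (Gamma : form -> Prop) : form -> Prop :=
| d_ipc f : ipc_axiom f -> ICK_deriv Gamma f
| d_hyp f : Gamma f -> ICK_deriv Gamma f
| d_CM : ICK_deriv Gamma
    (Iff (Cond p0 (And p1 p2)) (And (Cond p0 p1) (Cond p0 p2)))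
| d_CN : ICK_deriv Gamma (Iff (Cond p0 Top) Top)
| d_subst s f : ICK_deriv Gamma f -> ICK_deriv Gamma (subst s f)
| d_mp a b : ICK_deriv Gamma (Imp a b) -> ICK_deriv Gamma a -> ICK_deriv Gamma b
| d_congl a b c : ICK_deriv Gamma (Iff a b) ->
    ICK_deriv Gamma (Iff (Cond a c) (Cond b c))
| d_congr a b c : ICK_deriv Gamma (Iff a b) ->
    ICK_deriv Gamma (Iff (Cond c a) (Cond c b)).

Definition upset {X : Type} (le : X -> X -> Prop) (a : X -> Prop) : Prop :=
  forall x y, le x y -> a x -> a y.

Record cframe : Type := {
  cw : Type;
  cle : cw -> cw -> Prop;
  cR : (cw -> Prop) -> cw -> cw -> Prop;   (* R_a; only relevant for upsets a *)
  cw_inhabited : inhabited cw;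
  cle_refl : forall x, cle x x;
  cle_trans : forall x y z, cle x y -> cle y z -> cle x z;
  (* (<= o R_a) subseteq (R_a o <=), composition read diagrammatically:
     x <= y R_a z  implies  x R_a w <= z for some w *)
  cR_cond : forall a, upset cle a ->
    forall x y z, cle x y -> cR a y z -> exists w, cR a x w /\ cle w z
}.

Definition valuation (F : cframe) : Type := nat -> cw F -> Prop.
Definition valid_valuation (F : cframe) (V : valuation F) : Prop :=
  forall p, upset (cle F) (V p).

Fixpoint forces (F : cframe) (V : valuation F) (x : cw F) (f : form) : Prop :=
  match f with
  | Var p => V p x
  | Bot => False
  | And a b => forces F V x a /\ forces F V x b
  | Or a b => forces F V x a \/ forces F V x b
  | Imp a b => forall y, cle F x y -> forces F V y a -> forces F V y b
  | Cond a b => forall y, cR F (fun z => forces F V z a) x y -> forces F V y b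
  end.

Definition frame_valid (F : cframe) (f : form) : Prop :=
  forall V : valuation F, valid_valuation F V -> forall x, forces F V x f.

(* Truth sets
   are upsets (the frame condition (<= o R_a) ⊆ (R_a o <=) is exactly what
   persistence of [a []-> b] needs); forcing a substitution instance is forcing
   the original formula under the substituted valuation; and formulas whose
   equivalence is valid on the frame have the same truth set, so [R_a] cannot
   tell them apart, which gives the congruence rules. *)

From Stdlib Require Import FunctionalExtensionality PropExtensionality.

Definition truth_set (F : cframe) (V : valuation F) (f : form) : cw F -> Prop :=
  fun x => forces F V x f.

Section Forcing.

Variable F : cframe.

Lemma forces_persistent (V : valuation F) : valid_valuation F V ->
  forall f, upset (cle F) (truth_set F V f).
Proof.
  intros HV f; unfold upset, truth_set; induction f; simpl; intros x y Hxy H.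
  - exact (HV n x y Hxy H).
  - exact H.
  - destruct H; split; eauto.
  - destruct H; [left | right]; eauto.
  - intros z Hyz Hz. apply H; [eapply cle_trans; eauto | exact Hz].
  - intros z Hz.
    destruct (cR_cond F _ IHf1 x y z Hxy Hz) as [w [Hxw Hwz]].
    exact (IHf2 w z Hwz (H w Hxw)).
Qed.

Lemma forces_subst (V : valuation F) (s : nat -> form) :
  forall f x, forces F V x (subst s f) <->
              forces F (fun p => truth_set F V (s p)) x f.
Proof.
  induction f; simpl; intros x.
  - reflexivity.
  - reflexivity.
  - rewrite IHf1, IHf2; reflexivity.
  - rewrite IHf1, IHf2; reflexivity.
  - split; intros H y Hxy Ha; apply IHf2, H; try apply IHf1; assumption.
  - assert (E : truth_set F V (subst s f1) =
                truth_set F (fun p => truth_set F V (s p)) f1).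
    { apply functional_extensionality; intro z.
      apply propositional_extensionality, IHf1. }
    unfold truth_set in E; rewrite E.
    split; intros H y Hy; apply IHf2, H; exact Hy.
Qed.

Lemma forces_mp (V : valuation F) x a b :
  forces F V x (Imp a b) -> forces F V x a -> forces F V x b.
Proof. intros Hab Ha. exact (Hab x (cle_refl F x) Ha). Qed.

Lemma frame_valid_Iff a b : frame_valid F (Iff a b) <->
  forall V, valid_valuation F V -> forall x, forces F V x a <-> forces F V x b.
Proof.
  split.
  - intros H V HV x; destruct (H V HV x) as [Hab Hba].
    split; intro; [apply forces_mp with (a := a) | apply forces_mp with (a := b)];
      assumption.
  - intros H V HV x; split; intros y _; apply H; assumption.
Qed.

Lemma frame_valid_truth_set_eq a b : frame_valid F (Iff a b) ->
  forall V, valid_valuation F V -> truth_set F V a = truth_set F V b.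
Proof.
  intros H V HV; apply functional_extensionality; intro z.
  apply propositional_extensionality, (proj1 (frame_valid_Iff a b) H V HV).
Qed.


Lemma frame_valid_ipc_axiom f : ipc_axiom f -> frame_valid F f.
Proof.
  intros Hf V HV x; destruct Hf; simpl.
  - intros u _ Ha v Huv _. exact (forces_persistent V HV a u v Huv Ha).
  - intros u1 _ Habc u2 H12 Hab u3 H23 Ha.
    apply (Habc u3 (cle_trans F _ _ _ H12 H23) Ha u3 (cle_refl F u3)).
    exact (Hab u3 H23 Ha).
  - intros u _ [Ha _]; exact Ha.
  - intros u _ [_ Hb]; exact Hb.
  - intros u _ Ha v Huv Hb.
    split; [exact (forces_persistent V HV a u v Huv Ha) | exact Hb].
  - intros u _ Ha; left; exact Ha.
  - intros u _ Hb; right; exact Hb.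
  - intros u1 _ Hac u2 H12 Hbc u3 H23 [Ha | Hb].
    + exact (Hac u3 (cle_trans F _ _ _ H12 H23) Ha).
    + exact (Hbc u3 H23 Hb).
  - intros u _ [].
Qed.

Lemma frame_valid_CM :
  frame_valid F (Iff (Cond p0 (And p1 p2)) (And (Cond p0 p1) (Cond p0 p2))).
Proof.
  apply frame_valid_Iff; intros V HV x; simpl; split.
  - intro H; split; intros y Hy; apply H; exact Hy.
  - intros [H1 H2] y Hy; split; [apply H1 | apply H2]; exact Hy.
Qed.

Lemma frame_valid_CN : frame_valid F (Iff (Cond p0 Top) Top).
Proof. apply frame_valid_Iff; intros V HV x; simpl; split; auto. Qed.


Lemma frame_valid_subst s f : frame_valid F f -> frame_valid F (subst s f).
Proof.
  intros H V HV x; apply forces_subst, H.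
  intro p; exact (forces_persistent V HV (s p)).
Qed.

Lemma frame_valid_mp a b :
  frame_valid F (Imp a b) -> frame_valid F a -> frame_valid F b.
Proof.
  intros Hab Ha V HV x. exact (forces_mp V x a b (Hab V HV x) (Ha V HV x)).
Qed.

Lemma frame_valid_congl a b c : frame_valid F (Iff a b) ->
  frame_valid F (Iff (Cond a c) (Cond b c)).
Proof.
  intro H; apply frame_valid_Iff; intros V HV x; simpl.
  pose proof (frame_valid_truth_set_eq a b H V HV) as E; unfold truth_set in E.
  rewrite E; reflexivity.
Qed.

Lemma frame_valid_congr a b c : frame_valid F (Iff a b) ->
  frame_valid F (Iff (Cond c a) (Cond c b)).
Proof.
  intro H; apply frame_valid_Iff; intros V HV x; simpl.
  pose proof (proj1 (frame_valid_Iff a b) H V HV) as E.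
  split; intros Hc y Hy; apply E, Hc; exact Hy.
Qed.

End Forcing.

Theorem theorem4p8 (Gamma : form -> Prop) (phi : form) :
  ICK_deriv Gamma phi ->
  forall F : cframe, (forall g, Gamma g -> frame_valid F g) -> frame_valid F phi.
Proof.
  intros D F HGamma; induction D.
  - apply frame_valid_ipc_axiom; assumption.
  - apply HGamma; assumption.
  - apply frame_valid_CM.
  - apply frame_valid_CN.
  - apply frame_valid_subst; assumption.
  - apply frame_valid_mp with (a := a); assumption.
  - apply frame_valid_congl; assumption.
  - apply frame_valid_congr; assumption.
Qed.
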